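(* Let $R$ be a ring, $N\geqslant0$, $M$ an $N$-nilpotent $R$-bimodule, $F=M\otimes_R-$, and $X,Y,Z$ left $R$-modules. Let $\mathrm{Ind}(X)\stackrel{\alpha}\to\mathrm{Ind}(Y)\stackrel{\beta}\to\mathrm{Ind}(Z)$ be an exact sequence of $T_R(M)$-modules with $\alpha,\beta$ of the form $(\ast)$, determined by $\alpha_i\in\operatorname{Hom}_R(X,F^{i-1}(Y))$ and $\beta_i\in\operatorname{Hom}_R(Y,F^{i-1}(Z))$. Let $W$ be an $R$-module. Then the sequence $\operatorname{Hom}_{T_R(M)}(\mathrm{Ind}(Z),\mathrm{Ind}(W))\to\operatorname{Hom}_{T_R(M)}(\mathrm{Ind}(Y),\mathrm{Ind}(W))\to\operatorname{Hom}_{T_R(M)}(\mathrm{Ind}(X),\mathrm{Ind}(W))$ (induced by $\beta$ and $\alpha$) is exact if and only if: (C3) for any $f_i\in\operatorname{Hom}_R(Y,F^{i-1}(W))$, $1\leqslant i\leqslant N+1$, with $\sum_{i=1}^{j}F^{i-1}(f_{j-i+1})\circ\alpha_i=0$ for $j=1,\dots,N+1$, there exist $g_i\in\operatorname{Hom}_R(Z,F^{i-1}(W))$, $1\leqslant i\leqslant N+1$, such that $f_j=\sum_{i=1}^{j}F^{i-1}(g_{j-i+1})\circ\beta_i$ for each $1\leqslant j\leqslant N+1$.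
   Context: All rings are associative with identity; modules are left modules. For an $R$-bimodule $M$ set $M^{\otimes_R0}=R$ and $M^{\otimes_R(i+1)}=M\otimes_R M^{\otimes_Ri}$; $M$ is $N$-nilpotent if $M^{\otimes_R(N+1)}=0$. The tensor ring is $T_R(M)=\bigoplus_{i=0}^N M^{\otimes_Ri}$. Write $F=M\otimes_R-$. A $T_R(M)$-module is identified with a pair $(X,u)$, $X$ an $R$-module, $u\in\operatorname{Hom}_R(F(X),X)$; morphisms $(X,u)\to(X',u')$ are $R$-maps $f$ with $f\circ u=u'\circ F(f)$; exactness is checked on underlying $R$-modules. For an $R$-module $X$, $\mathrm{Ind}(X)=(\bigoplus_{i=1}^{N+1}F^{i-1}(X),c_X)$ with $c_X$ the inclusion of $F(\bigoplus_{i=1}^{N+1}F^{i-1}(X))\cong\bigoplus_{i=2}^{N+1}F^{i-1}(X)$ into $\bigoplus_{i=1}^{N+1}F^{i-1}(X)$. A morphism $\alpha:\mathrm{Ind}(X)\to\mathrm{Ind}(Y)$ ''of the form $(\ast)$'' determined by $\alpha_i\in\operatorname{Hom}_R(X,F^{i-1}(Y))$ is the lower triangular matrix with $(j,i)$ entry $F^{i-1}(\alpha_{j-i+1})$ for $i\le j$ and $0$ otherwise, i.e. $\alpha(x_1,\dots,x_{N+1})_j=\sum_{i=1}^jF^{i-1}(\alpha_{j-i+1})(x_i)$; every $T_R(M)$-morphism $\mathrm{Ind}(X)\to\mathrm{Ind}(Y)$ has this form. *)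

From HB Require Import structures.
From mathcomp Require Import all_boot all_order all_algebra.
From mathcomp Require Import boolp.
Set Implicit Arguments. Unset Strict Implicit. Unset Printing Implicit Defensive.
Import GRing.Theory.
Local Open Scope ring_scope.

Record bimodule_on (R : pzRingType) (M : lmodType R) := BimoduleOn {
  rmul : M -> R -> M;
  rmulA : forall m r s, rmul (rmul m r) s = rmul m (r * s);
  rmul1 : forall m, rmul m 1 = m;
  rmulDl : forall m m' r, rmul (m + m') r = rmul m r + rmul m' r;
  rmulDr : forall m r s, rmul m (r + s) = rmul m r + rmul m s;
  rmulZ : forall a m r, rmul (a *: m) r = a *: rmul m r
}.

Record tensor_functor (R : pzRingType) (M : lmodType R) (B : bimodule_on M) :=
 TensorFunctor {
  tF : lmodType R -> lmodType R;
  tens : forall X : lmodType R, M -> X -> tF X;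
  tensDl : forall (X : lmodType R) m m' (x : X), tens (m + m') x = tens m x + tens m' x;
  tensDr : forall (X : lmodType R) m (x x' : X), tens m (x + x') = tens m x + tens m x';
  tens_bal : forall (X : lmodType R) m r (x : X), tens (rmul B m r) x = tens m (r *: x);
  tensZ : forall (X : lmodType R) a m (x : X), a *: tens m x = tens (a *: m) x;
  tens_univ : forall (X : lmodType R) (A : zmodType) (phi : M -> X -> A),
     (forall m m' x, phi (m + m') x = phi m x + phi m' x) ->
     (forall m x x', phi m (x + x') = phi m x + phi m x') ->
     (forall m r x, phi (rmul B m r) x = phi m (r *: x)) ->
     exists h : {additive tF X -> A},
       (forall m x, h (tens m x) = phi m x) /\
       (forall h' : {additive tF X -> A},
           (forall m x, h' (tens m x) = phi m x) -> h' =1 h);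
  tFmap : forall X Y : lmodType R, {linear X -> Y} -> {linear tF X -> tF Y};
  tFmapE : forall (X Y : lmodType R) (f : {linear X -> Y}) m x,
     tFmap f (tens m x) = tens m (f x)
}.

Section Tensor.
Variables (R : pzRingType) (M : lmodType R) (B : bimodule_on M).
Variable T : tensor_functor B.

Fixpoint Fpow (n : nat) (X : lmodType R) : lmodType R :=
  match n with 0 => X | n'.+1 => tF T (Fpow n' X) end.

Fixpoint Fmapn (n : nat) (X Y : lmodType R) (f : {linear X -> Y}) :
    {linear Fpow n X -> Fpow n Y} :=
  match n return {linear Fpow n X -> Fpow n Y} with
  | 0 => f
  | n'.+1 => tFmap T (Fmapn n' f)
  end.

Lemma FpowD (a b : nat) (Y : lmodType R) : Fpow a (Fpow b Y) = Fpow (a + b) Y.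
Proof. by elim: a => [|a IH] //=; rewrite IH. Qed.

Definition Fcast (a b c : nat) (Y : lmodType R) (e : (a + b)%N = c)
    (x : Fpow a (Fpow b Y)) : Fpow c Y :=
  eq_rect _ (fun U : lmodType R => (U : Type)) x _
    (etrans (FpowD a b Y) (f_equal (fun n => Fpow n Y) e)).

(* N-nilpotency: M^{(x)(N+1)} = 0, where M^{(x)0} = R (regular left module)
   and M^{(x)(i+1)} = M (x)_R M^{(x)i} = F (M^{(x)i}). *)
Definition tpow (i : nat) : lmodType R := Fpow i (R^o : lmodType R).
Definition nilpotent_bimod (N : nat) : Prop := forall m : tpow N.+1, m = 0.

Variable N : nat.

(* index helpers for the matrices of the form (star): for j : 'I_(N+1) and
   i <= j, the indices i and j - i (0-based). *)
Definition wid (j : 'I_N.+1) (i : 'I_j.+1) : 'I_N.+1 := widen_ord (ltn_ord j) i.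
Definition sbo (j : 'I_N.+1) (i : 'I_j.+1) : 'I_N.+1 :=
  Ordinal (leq_ltn_trans (leq_subr i j) (ltn_ord j)).
Lemma wid_sbo (j : 'I_N.+1) (i : 'I_j.+1) : (wid i + sbo i)%N = j.
Proof. by rewrite /= subnKC //; have := ltn_ord i; rewrite ltnS. Qed.

(* The underlying R-module of Ind(X): (+)_{i=1}^{N+1} F^{i-1}(X),
   0-based: components indexed by i : 'I_(N+1), the i-th lying in F^i X. *)
Definition dsum (X : lmodType R) : Type := forall i : 'I_N.+1, Fpow i X.

Section DSum.
Variable X : lmodType R.
HB.instance Definition _ := Choice.on (dsum X).
Definition dsum_zero : dsum X := fun i => 0.
Definition dsum_add (u v : dsum X) : dsum X := fun i => u i + v i.
Definition dsum_opp (u : dsum X) : dsum X := fun i => - u i.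
Definition dsum_scale (a : R) (u : dsum X) : dsum X := fun i => a *: u i.
Lemma dsum_addA : associative dsum_add.
Proof. by move=> u v w; apply: functional_extensionality_dep => i; rewrite /dsum_add addrA. Qed.
Lemma dsum_addC : commutative dsum_add.
Proof. by move=> u v; apply: functional_extensionality_dep => i; rewrite /dsum_add addrC. Qed.
Lemma dsum_add0 : left_id dsum_zero dsum_add.
Proof. by move=> u; apply: functional_extensionality_dep => i; rewrite /dsum_add add0r. Qed.
Lemma dsum_addN : left_inverse dsum_zero dsum_opp dsum_add.
Proof. by move=> u; apply: functional_extensionality_dep => i; rewrite /dsum_add addNr. Qed.
HB.instance Definition _ := GRing.isZmodule.Build (dsum X)
  dsum_addA dsum_addC dsum_add0 dsum_addN.
Lemma dsum_scaleA a b (u : dsum X) :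
  dsum_scale a (dsum_scale b u) = dsum_scale (a * b) u.
Proof. by apply: functional_extensionality_dep => i; rewrite /dsum_scale scalerA. Qed.
Lemma dsum_scale1 : left_id 1 dsum_scale.
Proof. by move=> u; apply: functional_extensionality_dep => i; rewrite /dsum_scale scale1r. Qed.
Lemma dsum_scaleDr : right_distributive dsum_scale +%R.
Proof. by move=> a u v; apply: functional_extensionality_dep => i; rewrite /dsum_scale scalerDr. Qed.
Lemma dsum_scaleDl (u : dsum X) : {morph dsum_scale^~ u : a b / a + b}.
Proof. by move=> a b; apply: functional_extensionality_dep => i; rewrite /dsum_scale scalerDl. Qed.
HB.instance Definition _ := GRing.Zmodule_isLmodule.Build R (dsum X)
  dsum_scaleA dsum_scale1 dsum_scaleDr dsum_scaleDl.

Definition dproj (k : 'I_N.+1) (u : dsum X) : Fpow k X := u k.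
Lemma dproj_linear k : linear (dproj k).
Proof. by []. Qed.
HB.instance Definition _ (k : 'I_N.+1) := GRing.isLinear.Build R (dsum X) (Fpow k X) _
  (dproj k) (dproj_linear k).

(* The structure map c_X of Ind(X): F((+)_{i<=N} F^i X) = (+)_{1<=i<=N+1} F^i X
   (the summand F^{N+1} X vanishing) followed by the inclusion into
   (+)_{i<=N} F^i X; component 0 is 0 and component k+1 is F(proj_k). *)
Definition cInd (z : tF T (dsum X)) : dsum X :=
  fun j => (match nat_of_ord j as n return (n < N.+1)%N -> Fpow n X with
            | 0 => fun _ => 0
            | k.+1 => fun h => tFmap T (dproj (Ordinal (ltnW h))) z
            end) (ltn_ord j).
End DSum.

Definition Tmor (X X' : lmodType R) (u : tF T X -> X) (u' : tF T X' -> X')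
    (f : {linear X -> X'}) : Prop :=
  forall z, f (u z) = u' (tFmap T f z).

Definition IndMor (X Y : lmodType R) (f : {linear dsum X -> dsum Y}) : Prop :=
  Tmor (@cInd X) (@cInd Y) f.

(* The morphism Ind(X) -> Ind(Y) of the form (star) determined by
   a_k : X -> F^k Y (k = 0..N, i.e. alpha_{k+1} in the paper):
   (a x)_j = sum_{i<=j} F^i(a_{j-i})(x_i). *)
Definition starmap (X Y : lmodType R) (a : forall k : 'I_N.+1, {linear X -> Fpow k Y})
    (x : dsum X) : dsum Y :=
  fun j => \sum_(i < j.+1)
     Fcast (wid_sbo i) (Fmapn (wid i) (a (sbo i)) (x (wid i))).

Definition conv (X Y W : lmodType R)
    (f : forall k : 'I_N.+1, {linear Y -> Fpow k W})
    (a : forall k : 'I_N.+1, {linear X -> Fpow k Y}) (j : 'I_N.+1) (x : X) :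
    Fpow j W :=
  \sum_(i < j.+1) Fcast (wid_sbo i) (Fmapn (wid i) (f (sbo i)) (a (wid i) x)).
End Tensor.

From HB Require Import structures.
From mathcomp Require Import all_boot all_order all_algebra.
From mathcomp Require Import boolp.
Set Implicit Arguments. Unset Strict Implicit. Unset Printing Implicit Defensive.
Import GRing.Theory.
Local Open Scope ring_scope.

(* A T_R(M)-morphism f : Ind X -> Ind W is determined by its first
   column f_k = pi_k o f o iota_0: since iota_(i+1) = c_X o F(iota_i) and f commutes
   with the structure maps, the components of f o iota_i are F^i(f_(k-i)), i.e. f is
   the matrix (star) built from (f_k).  Conversely every family (f_k) defines such a
   morphism, and the first column of the composite of two matrices (star) is the
   convolution  sum_i F^i(f_(j-i)) o alpha_i.  So Hom_T(-, Ind W) turns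
   Ind X -> Ind Y -> Ind Z into the sequence of families under convolution with beta
   and alpha, whose exactness is (C3); of the exactness of the given sequence only
   beta o alpha = 0 is used.  Nilpotency of M is built into the model of Ind, whose
   structure map drops the summand F^(N+1). *)

Section TensorFunctor.
Variables (R : pzRingType) (M : lmodType R) (B : bimodule_on M).
Variable T : tensor_functor B.

Lemma tF_ext (U : lmodType R) (A : zmodType) (h1 h2 : tF T U -> A) :
  {morph h1 : x y / x + y} -> {morph h2 : x y / x + y} ->
  (forall m x, h1 (tens T m x) = h2 (tens T m x)) -> h1 =1 h2.
Proof.
move=> h1D h2D h12.
have hom (h : tF T U -> A) : {morph h : x y / x + y} -> nmod_morphism h.
  by move=> hD; split=> //; apply: (@addIr _ (h 0)); rewrite -hD !add0r.
pose h1' : {additive tF T U -> A} :=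
  HB.pack h1 (GRing.isNmodMorphism.Build _ _ h1 (hom h1 h1D)).
pose h2' : {additive tF T U -> A} :=
  HB.pack h2 (GRing.isNmodMorphism.Build _ _ h2 (hom h2 h2D)).
have [||| h [_ h_uniq]] := @tens_univ _ _ _ T U A (fun m x => h2 (tens T m x)).
- by move=> m m' x; rewrite tensDl h2D.
- by move=> m x x'; rewrite tensDr h2D.
- by move=> m r x; rewrite tens_bal.
by move=> z; rewrite [h1 z](h_uniq h1' h12) [h2 z](h_uniq h2' (fun _ _ => erefl)).
Qed.

Lemma tens0r (U : lmodType R) m : tens T m (0 : U) = 0.
Proof. by apply: (@addrI _ (tens T m (0 : U))); rewrite -tensDr !addr0. Qed.

Lemma tens_sumr (U : lmodType R) m (I : Type) (r : seq I) (P : pred I) (F : I -> U) :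
  tens T m (\sum_(i <- r | P i) F i) = \sum_(i <- r | P i) tens T m (F i).
Proof. by elim/big_rec2: _ => [|i x y _ <-]; rewrite ?tens0r ?tensDr. Qed.

Lemma tFmap_ext (U V : lmodType R) (f g : {linear U -> V}) :
  f =1 g -> tFmap T f =1 tFmap T g.
Proof. by move=> fg; apply: tF_ext => [x y|x y|m x]; rewrite ?raddfD // !tFmapE fg. Qed.

Lemma tFmap_comp (U V W : lmodType R) (f : {linear U -> V}) (g : {linear V -> W}) z :
  tFmap T g (tFmap T f z) = tFmap T (g \o f) z.
Proof. by move: z; apply: tF_ext => [x y|x y|m x]; rewrite ?raddfD // !tFmapE. Qed.

Lemma tFmap_id (U : lmodType R) (f : {linear U -> U}) : f =1 id -> tFmap T f =1 id.
Proof. by move=> f1; apply: tF_ext => [x y|x y|m x]; rewrite ?raddfD // !tFmapE f1. Qed.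

Lemma tFmap_eq0 (U V : lmodType R) (f : {linear U -> V}) :
  f =1 (fun=> 0) -> tFmap T f =1 (fun=> 0).
Proof.
move=> f0; apply: tF_ext => [x y|x y|m x]; rewrite ?raddfD ?addr0 //.
by rewrite tFmapE f0 tens0r.
Qed.

Definition tcast (U V : lmodType R) (p : U = V) (u : U) : V :=
  eq_rect U (fun W : lmodType R => W : Type) u V p.

Lemma tcast_id (U : lmodType R) (p : U = U) u : tcast p u = u.
Proof. by rewrite (Prop_irrelevance p erefl). Qed.

Lemma tcastD (U V : lmodType R) (p : U = V) u v : tcast p (u + v) = tcast p u + tcast p v.
Proof. by case: V / p. Qed.

Lemma tcast_tens (U V : lmodType R) (p : U = V) (q : tF T U = tF T V) m u :
  tcast q (tens T m u) = tens T m (tcast p u).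
Proof. by case: V / p q => q; rewrite !tcast_id. Qed.

Lemma tFmap_tcast (U V W : lmodType R) (g : {linear U -> W}) (h : {linear U -> V})
    (p : V = W) (q : tF T V = tF T W) :
  (forall x, g x = tcast p (h x)) -> forall z, tFmap T g z = tcast q (tFmap T h z).
Proof.
move=> gh; apply: tF_ext => [x y|x y|m x]; rewrite ?raddfD ?tcastD //.
by rewrite !tFmapE gh (tcast_tens p).
Qed.

Lemma Fmapn_ext n (U V : lmodType R) (f g : {linear U -> V}) :
  f =1 g -> Fmapn T n f =1 Fmapn T n g.
Proof. by move=> fg; elim: n => [|n IH] //=; apply: tFmap_ext. Qed.

Lemma Fmapn_eq0 n (U V : lmodType R) (f : {linear U -> V}) :
  f =1 (fun=> 0) -> Fmapn T n f =1 (fun=> 0).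
Proof. by move=> f0; elim: n => [|n IH] //=; apply: tFmap_eq0. Qed.

Lemma FcastE (a b c : nat) (Y : lmodType R) (e : (a + b)%N = c) p x :
  Fcast e x = @tcast (Fpow T a (Fpow T b Y)) (Fpow T c Y) p x.
Proof. exact: (congr1 (fun q => tcast q x) (Prop_irrelevance _ _)). Qed.

Lemma Fcast_is_linear (a b c : nat) (Y : lmodType R) (e : (a + b)%N = c) :
  linear (Fcast (T := T) (Y := Y) e).
Proof. by rewrite /Fcast; case: _ / (etrans _ _). Qed.
HB.instance Definition _ a b c Y e := GRing.isLinear.Build R _ _ _
  (Fcast (T := T) (Y := Y) e) (@Fcast_is_linear a b c Y e).

End TensorFunctor.

Section Induced.
Variables (R : pzRingType) (M : lmodType R) (B : bimodule_on M).
Variables (T : tensor_functor B) (N : nat).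

Local Notation coefs X Y := (forall k : 'I_N.+1, {linear X -> Fpow T k Y}).

(* Summands are indexed by nat, so that index arithmetic such as k - i stays in
   nat; out-of-range indices give 0. *)
Definition dsum_in (X : lmodType R) (n : nat) (w : Fpow T n X) : dsum T N X :=
  fun k => match n =P nat_of_ord k with
           | ReflectT e => eq_rect n (fun m => Fpow T m X) w _ e
           | ReflectF _ => 0
           end.

Lemma dsum_in_eq X n (w : Fpow T n X) (k : 'I_N.+1) (e : n = k) :
  dsum_in w k = eq_rect n (fun m => Fpow T m X) w k e.
Proof. by rewrite /dsum_in; case: eqP => // e'; rewrite (eq_irrelevance e e'). Qed.

Lemma dsum_in_id X (k : 'I_N.+1) (w : Fpow T k X) : dsum_in w k = w.
Proof. exact: (dsum_in_eq w (erefl (nat_of_ord k))). Qed.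

Lemma dsum_in_neq X n (w : Fpow T n X) (k : 'I_N.+1) : n != k -> dsum_in w k = 0.
Proof. by rewrite /dsum_in; case: eqP. Qed.

Lemma dsum_in_out X n (w : Fpow T n X) : (N < n)%N -> dsum_in w = 0.
Proof.
move=> Nn; apply: functional_extensionality_dep => k; apply: dsum_in_neq.
by apply/eqP => nk; move: (ltn_ord k); rewrite -nk ltnS leqNgt Nn.
Qed.

Lemma dsum_in_is_linear X n : linear (@dsum_in X n).
Proof.
move=> a u v; apply: functional_extensionality_dep => k.
rewrite -[RHS]/(a *: dsum_in u k + dsum_in v k).
have [nk|nk] := eqVneq n k; last by rewrite !dsum_in_neq // scaler0 addr0.
by rewrite !(dsum_in_eq _ nk); move: (nat_of_ord k) nk => m nk; case: m / nk.
Qed.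
HB.instance Definition _ X n := GRing.isLinear.Build R (Fpow T n X) (dsum T N X) _
  (@dsum_in X n) (@dsum_in_is_linear X n).

Lemma dsum_sum_in X (u : dsum T N X) : u = \sum_(i < N.+1) dsum_in (u i).
Proof.
apply: functional_extensionality_dep => k.
rewrite -[RHS]/(dproj k (\sum_(i < N.+1) dsum_in (u i))) raddf_sum (bigD1 k) //=.
by rewrite /dproj dsum_in_id big1 ?addr0 // => i ik; rewrite dsum_in_neq.
Qed.

Definition dsum_at (X : lmodType R) (n : nat) (u : dsum T N X) : Fpow T n X :=
  match (n < N.+1)%N =P true with ReflectT h => u (Ordinal h) | ReflectF _ => 0 end.

Lemma dsum_at_ord X (k : 'I_N.+1) (u : dsum T N X) : dsum_at k u = u k.
Proof.
case: k => k hk; rewrite /dsum_at /=; case: eqP => [h|]; last by rewrite hk.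
by rewrite (bool_irrelevance h hk).
Qed.

Lemma dsum_at_tcast X n (k : 'I_N.+1) (p : Fpow T n X = Fpow T k X) u :
  n = k -> tcast p (dsum_at n u) = u k.
Proof. by move=> nk; move: p; rewrite nk => p; rewrite tcast_id dsum_at_ord. Qed.

Lemma dsum_at_is_linear X n : linear (@dsum_at X n).
Proof. by move=> a u v; rewrite /dsum_at; case: eqP => // _; rewrite scaler0 addr0. Qed.
HB.instance Definition _ X n := GRing.isLinear.Build R (dsum T N X) (Fpow T n X) _
  (@dsum_at X n) (@dsum_at_is_linear X n).

Definition star_coef (X W : lmodType R) (f : {linear dsum T N X -> dsum T N W}) (n : nat)
  (x : X) : Fpow T n W := dsum_at n (f (dsum_in (n := 0) x)).

Lemma star_coef_is_linear X W f n : linear (@star_coef X W f n).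
Proof. by move=> a u v; rewrite /star_coef !linearP. Qed.
HB.instance Definition _ X W f n := GRing.isLinear.Build R X (Fpow T n W) _
  (@star_coef X W f n) (@star_coef_is_linear X W f n).

Lemma cInd0 X (z : tF T (dsum T N X)) (k : 'I_N.+1) : nat_of_ord k = 0%N -> cInd z k = 0.
Proof. by case: k => [[|k] hk]. Qed.

Lemma cIndS X (z : tF T (dsum T N X)) k (hk : (k.+1 < N.+1)%N) (h'k : (k < N.+1)%N) :
  cInd z (Ordinal hk) = tFmap T (dproj (Ordinal h'k)) z.
Proof. by rewrite /cInd /= (bool_irrelevance (ltnW _) h'k). Qed.

Lemma cIndD X (x y : tF T (dsum T N X)) : cInd (x + y) = cInd x + cInd y.
Proof.
apply: functional_extensionality_dep => -[[|k] hk].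
  by rewrite -[RHS]/(cInd x _ + cInd y _) !cInd0 ?addr0.
by rewrite -[RHS]/(cInd x _ + cInd y _) !(cIndS _ _ (ltnW hk)) raddfD.
Qed.

Lemma dsum_in_cInd X n (w : Fpow T n.+1 X) : (n < N)%N ->
  dsum_in w = cInd (tFmap T (@dsum_in X n) w).
Proof.
move=> nN; apply: functional_extensionality_dep => -[[|k] hk].
  by rewrite dsum_in_neq.
rewrite (cIndS _ _ (ltnW hk)) tFmap_comp; have [nk|nk] := eqVneq n k.
  subst k; rewrite (dsum_in_eq w (k := Ordinal hk) erefl) /=; symmetry; apply: tFmap_id => x.
  exact: (dsum_in_id (k := Ordinal (ltnW hk))).
rewrite dsum_in_neq ?eqSS //; symmetry; apply: tFmap_eq0 => x /=.
by rewrite /dproj dsum_in_neq.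
Qed.

Lemma starmapE (X Y : lmodType R) (g : coefs X Y) u j :
  starmap g u j =
  \sum_(i < j.+1) Fcast (wid_sbo i) (Fmapn T (wid i) (g (sbo i)) (u (wid i))).
Proof. by []. Qed.

Lemma starmap_is_linear (X Y : lmodType R) (g : coefs X Y) :
  linear (starmap g).
Proof.
move=> a u v; apply: functional_extensionality_dep => j.
rewrite -[RHS]/(a *: starmap g u j + starmap g v j) /starmap scaler_sumr -big_split.
by apply: eq_bigr => i _; rewrite -[(a *: u + v) _]/(a *: u _ + v _) !linearP.
Qed.
HB.instance Definition _ (X Y : lmodType R) g :=
  GRing.isLinear.Build R (dsum T N X) (dsum T N Y) _
  (@starmap R M B T N X Y g) (@starmap_is_linear X Y g).

Lemma starmap_ext (X Y : lmodType R) (g h : coefs X Y) :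
  (forall k, g k =1 h k) -> starmap g =1 starmap h.
Proof.
move=> gh u; apply: functional_extensionality_dep => j.
by apply: eq_bigr => i _; rewrite (Fmapn_ext (gh (sbo i))).
Qed.

Lemma starmap_eq0 (X Y : lmodType R) (g : coefs X Y) :
  (forall k, g k =1 (fun=> 0)) -> starmap g =1 (fun=> 0).
Proof.
move=> g0 u; apply: functional_extensionality_dep => j.
by rewrite starmapE big1 // => i _; rewrite (Fmapn_eq0 (g0 (sbo i))) raddf0.
Qed.

Lemma starmap_dsum_in0 (X Y : lmodType R) (g : coefs X Y) x :
  starmap g (dsum_in (n := 0) x) = fun k => g k x.
Proof.
apply: functional_extensionality_dep => k.
rewrite starmapE big_ord_recl big1 ?addr0 => [|i _]; last first.
  by rewrite dsum_in_neq // !raddf0.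
rewrite (dsum_in_eq x (k := wid ord0) erefl) /=.
have cast_g (o : 'I_N.+1) (p : Fpow T o Y = Fpow T k Y) : o = k -> tcast p (g o x) = g k x.
  by move=> ok; subst o; rewrite tcast_id.
rewrite (FcastE _ (etrans (FpowD T 0 (sbo (@ord0 k)) Y) (congr1 (Fpow T ^~ Y) (wid_sbo ord0)))).
by apply: cast_g; apply: val_inj; rewrite /= subn0.
Qed.

Lemma Fcast_tens_family (Y Z : lmodType R) (g : coefs Y Z)
    n c (o1 o2 : 'I_N.+1) (e1 : (n.+1 + o1)%N = c.+1) (e2 : (n + o2)%N = c) m
    (y : Fpow T n Y) : o1 = o2 ->
  Fcast e1 (tFmap T (Fmapn T n (g o1)) (tens T m y)) =
  tens T m (Fcast e2 (Fmapn T n (g o2) y)).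
Proof.
move=> o12; subst o2; pose p := etrans (FpowD T n o1 Z) (congr1 (Fpow T ^~ Z) e2).
by rewrite tFmapE (FcastE e1 (congr1 (tF T) p)) (FcastE e2 p) (tcast_tens p).
Qed.

Lemma IndMor_starmap (X Y : lmodType R) (g : coefs X Y) :
  IndMor (starmap g).
Proof.
move=> z; apply: functional_extensionality_dep => -[[|j] hj].
  by rewrite [RHS]cInd0 //= starmapE big_ord_recl big_ord0 addr0 cInd0 // !raddf0.
rewrite [RHS](cIndS _ _ (ltnW hj)) tFmap_comp; move: z.
apply: tF_ext => [x y|x y|m u]; rewrite ?cIndD ?raddfD //.
rewrite tFmapE /= /dproj !starmapE tens_sumr big_ord_recl cInd0 // !raddf0 add0r.
apply: eq_bigr => i _.
have -> : cInd (tens T m u) (wid (j := Ordinal hj) (lift ord0 i)) =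
          tFmap T (dproj (wid (j := Ordinal (ltnW hj)) i)) (tens T m u).
  exact: cIndS.
rewrite tFmapE.
exact: (Fcast_tens_family g _ (wid_sbo (j := Ordinal (ltnW hj)) i) m _ (val_inj _)).
Qed.

Lemma IndMor_comp (X Y Z : lmodType R) (f : {linear dsum T N X -> dsum T N Y})
    (g : {linear dsum T N Y -> dsum T N Z}) :
  IndMor f -> IndMor g -> IndMor (g \o f).
Proof. by move=> fI gI z /=; rewrite fI gI tFmap_comp. Qed.

Section Morphism.
Variables (X W : lmodType R) (f : {linear dsum T N X -> dsum T N W}).
Hypothesis fI : IndMor f.

Lemma IndMor_dsum_inS n (w : Fpow T n.+1 X) k (hk : (k.+1 < N.+1)%N) : (n < N)%N ->
  f (dsum_in w) (Ordinal hk) = tFmap T (dproj (Ordinal (ltnW hk)) \o f \o @dsum_in X n) w.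
Proof. by move=> nN; rewrite (dsum_in_cInd w nN) fI (cIndS _ _ (ltnW hk)) !tFmap_comp. Qed.

Lemma IndMor_dsum_in_lt i (w : Fpow T i X) (k : 'I_N.+1) : (k < i)%N -> f (dsum_in w) k = 0.
Proof.
elim: i w k => [|i IH] w [k hk] //= ki.
have [Ni|iN] := leqP N i; first by rewrite dsum_in_out ?ltnS // raddf0.
case: k hk ki => [|k] hk ki.
  by rewrite (dsum_in_cInd w iN) fI cInd0.
by rewrite IndMor_dsum_inS //; apply: tFmap_eq0 => x /=; apply: (IH x (Ordinal (ltnW hk))).
Qed.

Lemma IndMor_dsum_in_ge i (w : Fpow T i X) (k : 'I_N.+1) (ik : (i <= k)%N)
    (p : Fpow T i (Fpow T (k - i) W) = Fpow T k W) :
  f (dsum_in w) k = tcast p (Fmapn T i (star_coef f (k - i)) w).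
Proof.
elim: i w k ik p => [|i IH] w [k hk] /= ik p.
  by rewrite /star_coef (dsum_at_tcast (k := Ordinal hk)) ?subn0.
case: k hk ik p => // k hk ik p; rewrite ltnS in ik.
have iN : (i < N)%N := leq_ltn_trans ik hk.
pose p' := etrans (FpowD T i (k - i) W) (congr1 (Fpow T ^~ W) (subnKC ik)).
rewrite IndMor_dsum_inS //; apply: (tFmap_tcast (p := p')) => x /=.
exact: (IH x (Ordinal (ltnW hk))).
Qed.

Lemma IndMor_starmap_coef u : f u = starmap (fun k : 'I_N.+1 => star_coef f k) u.
Proof.
apply: functional_extensionality_dep => j.
rewrite {1}(dsum_sum_in u) raddf_sum.
rewrite -[LHS]/(dproj j (\sum_(i < N.+1) f (dsum_in (u i)))) raddf_sum /dproj.
rewrite (bigID (fun i : 'I_N.+1 => (i < j.+1)%N)) /= [X in _ + X]big1 ?addr0; last first.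
  by move=> i; rewrite -leqNgt => ji; apply: IndMor_dsum_in_lt.
rewrite (big_ord_narrow (ltn_ord j)); apply: eq_bigr => i _.
exact: (IndMor_dsum_in_ge _ (ltn_ord i)).
Qed.

End Morphism.

Lemma conv_starmap (X Y W : lmodType R) (g : coefs Y W) (a : coefs X Y) j x :
  conv g a j x = starmap g (starmap a (dsum_in (n := 0) x)) j.
Proof. by rewrite starmap_dsum_in0. Qed.

Lemma star_coef_comp (X Y W : lmodType R) (g : coefs Y W) (a : coefs X Y) (j : 'I_N.+1) x :
  star_coef (starmap g \o starmap a) j x = conv g a j x.
Proof. by rewrite /star_coef dsum_at_ord conv_starmap. Qed.

End Induced.

Unset Implicit Arguments. Set Strict Implicit. Set Printing Implicit Defensive.

Theorem lemma2p2 (R : pzRingType) (M : lmodType R) (B : bimodule_on M)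
    (T : tensor_functor B) (N : nat) (nilM : nilpotent_bimod T N)
    (X Y Z : lmodType R)
    (a : forall k : 'I_N.+1, {linear X -> Fpow T k Y})
    (b : forall k : 'I_N.+1, {linear Y -> Fpow T k Z})
    (exact_ab : forall y : dsum T N Y,
        starmap b y = 0 <-> exists x : dsum T N X, y = starmap a x)
    (W : lmodType R) :
  (* exactness of Hom_T(Ind Z, Ind W) -> Hom_T(Ind Y, Ind W) -> Hom_T(Ind X, Ind W) *)
  (forall f : {linear dsum T N Y -> dsum T N W}, IndMor f ->
     ((forall x : dsum T N X, f (starmap a x) = 0) <->
      exists2 g : {linear dsum T N Z -> dsum T N W}, IndMor g &
        forall y : dsum T N Y, f y = g (starmap b y)))
  <->
  (* (C3) *)
  (forall f : forall k : 'I_N.+1, {linear Y -> Fpow T k W},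
     (forall (j : 'I_N.+1) (x : X), conv f a j x = 0) ->
     exists g : forall k : 'I_N.+1, {linear Z -> Fpow T k W},
       forall (j : 'I_N.+1) (y : Y), f j y = conv g b j y).
Proof.
split=> [hom_exact f fa0 | C3 f fI].
- have fI := IndMor_starmap f.
  have faI := IndMor_comp (IndMor_starmap a) fI.
  have fa_0 x : starmap f (starmap a x) = 0.
    rewrite -[LHS]/((starmap f \o starmap a) x) (IndMor_starmap_coef faI).
    by apply: starmap_eq0 => k y /=; rewrite star_coef_comp fa0.
  have [g gI f_gb] := (hom_exact _ fI).1 fa_0.
  exists (fun k => star_coef g k) => j y.
  by rewrite conv_starmap -(IndMor_starmap_coef gI) -f_gb /= starmap_dsum_in0.
- split=> [fa0 | [g _ f_gb] x]; last first.
    by rewrite f_gb (exact_ab _).2 ?raddf0 //; exists x.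
  have fa_coef0 j x : conv (fun k => star_coef f k) a j x = 0.
    by rewrite conv_starmap -(IndMor_starmap_coef fI) fa0.
  have [g f_gb] := C3 _ fa_coef0.
  exists (starmap g); first exact: IndMor_starmap.
  have gbI := IndMor_comp (IndMor_starmap b) (IndMor_starmap g).
  move=> y; rewrite -[RHS]/((starmap g \o starmap b) y).
  rewrite (IndMor_starmap_coef fI) (IndMor_starmap_coef gbI).
  by apply: starmap_ext => k z /=; rewrite star_coef_comp -f_gb.
Qed.
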